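(* Let $T\in\mathbb{T}$. Then no non-pendant edge of $T$ belongs to a maximum matching of $T$.
   Context: $\mathbb{T}$ is the class of simple undirected weighted trees $T$ (nonzero real weights on edges) such that (i) $T$ has at least one non-pendant vertex, and (ii) every non-pendant vertex of $T$ is adjacent to at least one pendant vertex. A pendant vertex is a vertex of degree one; a pendant edge is an edge incident to a pendant vertex; a non-pendant edge is any other edge. A maximum matching is a set of pairwise vertex-disjoint edges of maximum cardinality. *)

From HB Require Import structures.
From mathcomp Require Import all_boot all_order all_algebra.
Set Implicit Arguments. Unset Strict Implicit. Unset Printing Implicit Defensive.
Import Order.TTheory GRing.Theory Num.Theory.

(* A simple undirected graph on a finite vertex type V is a symmetric,
   irreflexive relation e : rel V. Edges are represented as 2-element sets. *)
Section Graphs.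
Variable V : finType.
Variable e : rel V.

Definition simple_graph : Prop := symmetric e /\ irreflexive e.

Definition edges : {set {set V}} := [set [set x; y] | x in V, y in V & e x y].

Definition deg (x : V) : nat := #|[set y | e x y]|.

Definition pendant (x : V) : bool := deg x == 1%N.

Definition is_tree : Prop :=
  [/\ simple_graph, (0 < #|V|)%N,
      (forall x y : V, connect e x y) & #|edges| = #|V|.-1].

Definition matching (M : {set {set V}}) : Prop :=
  M \subset edges /\
  (forall f g, f \in M -> g \in M -> f != g -> [disjoint f & g]).

Definition maximum_matching (M : {set {set V}}) : Prop :=
  matching M /\ (forall M', matching M' -> (#|M'| <= #|M|)%N).

Definition non_pendant_edge (x y : V) : Prop :=
  e x y /\ ~~ pendant x /\ ~~ pendant y.

Definition in_class_T (R : numDomainType) (w : V -> V -> R) : Prop :=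
  [/\ is_tree,
      (forall x y, e x y -> w x y = w y x),
      (forall x y, e x y -> w x y != 0%R),
      (exists v, ~~ pendant v) &
      (forall v, ~~ pendant v -> exists2 u, e v u & pendant u)].
End Graphs.

From HB Require Import structures.
From mathcomp Require Import all_boot all_order all_algebra.
Set Implicit Arguments. Unset Strict Implicit.

(* If the edge xy of a maximum matching M joins two non-pendant vertices that
   have pendant neighbours u and v, then u and v are unmatched: the only edges
   at u and v are ux and vy, and these meet xy.  Trading xy for ux and vy then
   gives a matching with one more edge.  Neither acyclicity nor the weights
   play a role: the argument works in any simple graph. *)

Lemma disjoint_set2 (T : finType) (a b : T) (A : {set T}) :
  [disjoint [set a; b] & A] = (a \notin A) && (b \notin A).
Proof.
have set2E : [set a; b] =i predU1 a (pred1 b) by move=> z; rewrite !inE.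
by rewrite (eq_disjoint set2E) disjointU1 disjoint1.
Qed.

Section Matchings.
Variables (V : finType) (e : rel V).

Lemma mem_edges a b : e a b -> [set a; b] \in edges e.
Proof. by move=> eab; apply/imset2P; exists a b; rewrite ?inE. Qed.

Lemma edgesP f : f \in edges e -> exists a b, e a b /\ f = [set a; b].
Proof. by case/imset2P => a b _; rewrite inE => eab ->; exists a, b. Qed.

Lemma edges_neq0 f : f \in edges e -> f != set0.
Proof.
by case/edgesP => a [b [_ ->]]; apply/set0Pn; exists a; rewrite set21.
Qed.

Lemma matching_subset (M M' : {set {set V}}) :
  matching e M -> M' \subset M -> matching e M'.
Proof.
move=> [Medges Mdisj] sM'M; split; first exact: subset_trans sM'M Medges.
by move=> f g fM' gM'; apply: Mdisj; apply: (subsetP sM'M).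
Qed.

Lemma matching_disjointD1 (M : {set {set V}}) f h :
  matching e M -> f \in M -> h \in M :\ f -> [disjoint f & h].
Proof.
by move=> [_ Mdisj] fM /setD1P[hf hM]; apply: Mdisj; rewrite // eq_sym.
Qed.

Section AddEdge.
Variables (M : {set {set V}}) (g : {set V}).
Hypothesis g_edge : g \in edges e.
Hypothesis g_disj : {in M, forall h : {set V}, [disjoint g & h]}.

Lemma disjoint_edge_notin : g \notin M.
Proof.
apply/negP => /g_disj; rewrite -setI_eq0 setIid.
by rewrite (negbTE (edges_neq0 g_edge)).
Qed.

Lemma matchingU1 : matching e M -> matching e (g |: M).
Proof.
move=> [Medges Mdisj]; split.
  by apply/subsetP => f /setU1P[-> // | fM]; apply: (subsetP Medges).
move=> f h /setU1P[-> | fM] /setU1P[-> | hM]; rewrite ?eqxx // => fh.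
- exact: g_disj hM.
- by rewrite disjoint_sym; apply: g_disj fM.
- exact: Mdisj fM hM fh.
Qed.

Lemma card_matchingU1 : #|g |: M| = #|M|.+1.
Proof. by rewrite cardsU1 disjoint_edge_notin. Qed.

End AddEdge.

Lemma pendant_neighbour_uniq u a b : pendant e u -> e u a -> e u b -> a = b.
Proof.
rewrite /pendant /deg => /cards1P[z Nu] eua eub.
have : a \in [set y | e u y] by rewrite inE.
have : b \in [set y | e u y] by rewrite inE.
by rewrite Nu !inE => /eqP -> /eqP ->.
Qed.

Hypothesis e_sym : symmetric e.

Lemma pendant_edge f u x :
  f \in edges e -> u \in f -> pendant e u -> e u x -> f = [set u; x].
Proof.
case/edgesP => a [b [eab ->]] /set2P[] -> pu eux.
  by rewrite (pendant_neighbour_uniq pu eab eux).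
by rewrite setUC (pendant_neighbour_uniq pu (etrans (e_sym b a) eab) eux).
Qed.

Hypothesis e_irr : irreflexive e.

Lemma pendant_unmatched (M : {set {set V}}) x y u :
  matching e M -> [set x; y] \in M -> pendant e u -> e u x -> u != y ->
  {in M, forall h : {set V}, u \notin h}.
Proof.
move=> Mmatch xyM pu eux uy h hM; apply/negP => uh.
have ux : u != x by apply: contraTneq eux => ->; rewrite e_irr.
have u_xy : u \notin [set x; y] by rewrite !inE negb_or ux uy.
have hMxy : h \in M :\ [set x; y].
  by rewrite !inE hM andbT; apply: contraNneq u_xy => <-.
have := matching_disjointD1 Mmatch xyM hMxy.
rewrite disjoint_sym (pendant_edge (subsetP Mmatch.1 _ hM) uh pu eux).
by rewrite disjoint_set2 set21 andbF.
Qed.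

Lemma nonpendant_edge_notin_maximum_matching M x y u v :
  maximum_matching e M -> ~~ pendant e x -> ~~ pendant e y -> e x y ->
  e x u -> pendant e u -> e y v -> pendant e v -> [set x; y] \notin M.
Proof.
move=> [Mmatch Mmax] npx npy exy exu pu eyv pv; apply/negP => xyM.
have eux : e u x by rewrite e_sym.
have evy : e v y by rewrite e_sym.
have xy : x != y by apply: contraTneq exy => ->; rewrite e_irr.
have uy : u != y by apply: contraNneq npy => <-.
have vx : v != x by apply: contraNneq npx => <-.
have uv : u != v.
  apply: contraNneq xy => uv; apply/eqP/(pendant_neighbour_uniq pu eux).
  by rewrite uv.
have u_free := pendant_unmatched Mmatch xyM pu eux uy.
have yxM : [set y; x] \in M by rewrite setUC.
have v_free := pendant_unmatched Mmatch yxM pv evy vx.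
set M0 := M :\ [set x; y].
have M0_avoid h : h \in M0 -> (x \notin h) && (y \notin h).
  by move/(matching_disjointD1 Mmatch xyM); rewrite disjoint_set2.
have vy_disj : {in M0, forall h : {set V}, [disjoint [set v; y] & h]}.
  move=> h hM0; rewrite disjoint_set2 v_free ?(setD1P hM0).2 //.
  by case/andP: (M0_avoid h hM0).
have ux_disj :
    {in [set v; y] |: M0, forall h : {set V}, [disjoint [set u; x] & h]}.
  move=> h /setU1P[-> | hM0]; rewrite disjoint_set2.
    by rewrite !inE !negb_or uv uy eq_sym vx xy.
  by rewrite u_free ?(setD1P hM0).2 //; case/andP: (M0_avoid h hM0).
have M'match : matching e ([set u; x] |: ([set v; y] |: M0)).
  apply: matchingU1 (mem_edges eux) ux_disj _.
  apply: matchingU1 (mem_edges evy) vy_disj _.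
  exact: matching_subset Mmatch (subD1set M [set x; y]).
have := Mmax _ M'match.
rewrite (card_matchingU1 (mem_edges eux) ux_disj).
rewrite (card_matchingU1 (mem_edges evy) vy_disj) (cardsD1 [set x; y] M) xyM.
by rewrite -/M0 add1n ltnn.
Qed.

End Matchings.

Theorem theorem3p3 (V : finType) (e : rel V) (R : numDomainType)
    (w : V -> V -> R) :
  in_class_T e w ->
  forall M : {set {set V}}, maximum_matching e M ->
  forall x y : V, non_pendant_edge e x y -> [set x; y] \notin M.
Proof.
case=> [[[e_sym e_irr] _ _ _] _ _ _ pendant_nbr] M maxM x y [exy [npx npy]].
have [u exu pu] := pendant_nbr x npx.
have [v eyv pv] := pendant_nbr y npy.
exact: nonpendant_edge_notin_maximum_matching maxM npx npy exy exu pu eyv pv.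
Qed.
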